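(* Let $1\leq n\leq N$ and let $R_N$ be a rejective sampling design of size $n$ with canonical parameters $\mathbf{p}_N=(p_1,\ldots,p_N)\in(0,1)^N$, $\sum_{i=1}^Np_i=n$, and first-order inclusion probabilities $\pi_1,\ldots,\pi_N$. Let $d_N=\sum_{i=1}^Np_i(1-p_i)$ and suppose $d_N\geq1$. Then for all $i\in\{1,\ldots,N\}$, $$\left|\frac1{\pi_i}-\frac1{p_i}\right|\leq\frac{6}{d_N}\cdot\frac{1-\pi_i}{\pi_i}.$$
   Context: A rejective design of size $n$ on $\{1,\ldots,N\}$ with canonical parameters $\mathbf{p}_N$ (satisfying $\sum_ip_i=n$) is the distribution of a random subset $S$ with $\mathbb{P}(S=s)=C\prod_{i\in s}p_i\prod_{i\notin s}(1-p_i)$ if $\#s=n$ and $0$ otherwise, $C$ a normalizing constant; $\pi_i=\mathbb{P}(i\in S)$. *)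

From HB Require Import structures.
From mathcomp Require Import all_boot all_order all_algebra.
Set Implicit Arguments. Unset Strict Implicit. Unset Printing Implicit Defensive.
Import Order.TTheory GRing.Theory Num.Theory.
Local Open Scope ring_scope.

Definition rej_weight (R : realFieldType) (N : nat) (p : 'I_N -> R)
    (s : {set 'I_N}) : R :=
  (\prod_(i in s) p i) * (\prod_(i in ~: s) (1 - p i)).

Definition rej_prob (R : realFieldType) (N n : nat) (p : 'I_N -> R)
    (s : {set 'I_N}) : R :=
  if #|s| == n then
    rej_weight p s / (\sum_(t : {set 'I_N} | #|t| == n) rej_weight p t)
  else 0.

Definition rej_incl (R : realFieldType) (N n : nat) (p : 'I_N -> R)
    (i : 'I_N) : R :=
  \sum_(s : {set 'I_N} | i \in s) rej_prob n p s.

Definition rej_dN (R : realFieldType) (N : nat) (p : 'I_N -> R) : R :=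
  \sum_(i < N) p i * (1 - p i).

(* Let S be the number of successes among independent Bernoulli(p_j), j <> i.
   Conditioning the Poisson design on the sample size gives
   pi_i = tilt r p_i, the probability whose odds are r times those of p_i, with
   r = P(S = n - 1) / P(S = n); then 1/pi_i - 1/p_i = (1 - r)(1 - pi_i)/pi_i
   exactly, so it suffices to show |1 - r| <= 6 / d_N.
   Removing a unit j from S, with A_j = P(S - X_j = n - 1), the quantities
   psi_j = A_j (p_j / P(S = n) + (1 - p_j) / P(S = n - 1)) - 1 satisfy
   sum_j psi_j = 1, and p_j A_j / P(S = n) - p_j = tilt r p_j - p_j + psi_j tilt r p_j
   sums to p_i.  Log-concavity of the law of S gives psi_j >= 0; bounding each
   summand from the appropriate side by a multiple of (r - 1) p_j (1 - p_j)
   and using d_N >= 1 gives (r - 1) d_N <= 5 if r >= 1 and (1 - r) d_N <= 1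
   otherwise. *)

From HB Require Import structures.
From mathcomp Require Import all_boot all_order all_algebra.
From mathcomp Require Import ring lra.
Import Order.TTheory GRing.Theory Num.Theory.
Local Open Scope ring_scope.
Set Implicit Arguments. Unset Strict Implicit. Unset Printing Implicit Defensive.

Section Tilt.
Variable R : realFieldType.
Implicit Types r q x : R.

Definition tilt r q : R := r * q / (r * q + (1 - q)).

Lemma tilt_gt0 r q : 0 < r -> 0 < q < 1 -> 0 < tilt r q.
Proof. by move=> r0 /andP[q0 q1]; apply: divr_gt0; nra. Qed.

Lemma tilt_le1 r q : 0 < r -> 0 < q < 1 -> tilt r q <= 1.
Proof. by move=> r0 /andP[q0 q1]; rewrite /tilt ler_pdivrMr; nra. Qed.

Lemma tilt_ratio a b q : 0 <= a -> 0 < b -> 0 < q < 1 ->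
  tilt (a / b) q = q * a / (q * a + (1 - q) * b).
Proof.
move=> a0 b0 /andP[q0 q1]; have ab0 : 0 <= a / b by exact: divr_ge0 (ltW b0).
rewrite /tilt; field; rewrite !gt_eqF //=; nra.
Qed.

Lemma invr_tilt_sub r q : 0 < r -> 0 < q < 1 ->
  (tilt r q)^-1 - q^-1 = (1 - r) * ((1 - tilt r q) / tilt r q).
Proof.
move=> r0 /andP[q0 q1]; rewrite /tilt; field.
by rewrite !gt_eqF //=; nra.
Qed.

Lemma tilt_sub r q : 0 < r -> 0 < q < 1 ->
  tilt r q - q = (r - 1) / r * (q * (1 - q))
                 + q * (1 - q) ^+ 2 * (r - 1) ^+ 2 / (r * (r * q + (1 - q))).
Proof. by move=> r0 /andP[q0 q1]; rewrite /tilt; field; rewrite !gt_eqF //=; nra. Qed.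

Lemma tilt_sub_remainder_ge r q : 1 <= r -> 0 < q < 1 -> r * q < 1 - q ->
  (r - 1) ^+ 2 / (2 * (r + 1) ^+ 2) * (r * q / (1 - q))
    <= q * (1 - q) ^+ 2 * (r - 1) ^+ 2 / (r * (r * q + (1 - q))).
Proof.
move=> r1 /andP[q0 q1] small.
have sq_le : r ^+ 2 <= ((1 - q) * (r + 1)) ^+ 2 by rewrite ler_sqr ?nnegrE; nra.
have cubic : r ^+ 2 * (r * q + (1 - q)) <= 2 * (r + 1) ^+ 2 * (1 - q) ^+ 3.
  rewrite (_ : 2 * _ * _ = ((1 - q) * (r + 1)) ^+ 2 * (2 * (1 - q))); last by ring.
  by apply: ler_pM => //; [exact: sqr_ge0 | nra | lra].
rewrite -subr_ge0.
have -> : q * (1 - q) ^+ 2 * (r - 1) ^+ 2 / (r * (r * q + (1 - q)))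
          - (r - 1) ^+ 2 / (2 * (r + 1) ^+ 2) * (r * q / (1 - q))
        = q * (r - 1) ^+ 2 * (2 * (r + 1) ^+ 2 * (1 - q) ^+ 3 - r ^+ 2 * (r * q + (1 - q)))
          / (2 * r * (r * q + (1 - q)) * (r + 1) ^+ 2 * (1 - q)).
  by field; rewrite !gt_eqF //=; nra.
have D0 : 0 < r * q + (1 - q) by nra.
apply: divr_ge0; last by apply/ltW; rewrite !mulr_gt0 ?exprn_gt0 //; lra.
by apply: mulr_ge0; [apply: mulr_ge0; [lra | exact: sqr_ge0] | lra].
Qed.

Lemma tilt_excess_ge r q x : 1 <= r -> 0 < q < 1 -> 0 <= x -> x * (1 - q) <= r * q ->
  (r - 1) ^+ 2 / (2 * (r + 1) ^+ 2) * x + (r - 1) / r * (q * (1 - q))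
    <= tilt r q - q + x * tilt r q.
Proof.
move=> r1 q01 x0 xle; have /andP[q0 q1] := q01.
rewrite tilt_sub //; last lra.
set c := _ / (2 * _); set E := _ / (r * _).
have c0 : 0 <= c by apply: divr_ge0; [exact: sqr_ge0 | apply: mulr_ge0 => //; exact: sqr_ge0].
have E0 : 0 <= E.
  apply: divr_ge0; last by nra.
  by apply: mulr_ge0; [apply: mulr_ge0; [lra | exact: sqr_ge0] | exact: sqr_ge0].
have xt0 : 0 <= x * tilt r q by apply: mulr_ge0 => //; apply: ltW; apply: tilt_gt0 => //; lra.
suff : c * x <= E + x * tilt r q by lra.
case: (ltrP (r * q) (1 - q)) => [small | big].
  have := tilt_sub_remainder_ge r1 q01 small; rewrite -/c -/E.
  have : c * x <= c * (r * q / (1 - q)) by apply: ler_wpM2l => //; rewrite ler_pdivlMr; lra.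
  lra.
have c_half : c <= 1 / 2 by rewrite /c ler_pdivrMr; nra.
have t_half : 1 / 2 <= tilt r q by rewrite /tilt ler_pdivlMr; nra.
have := ler_wpM2r x0 c_half; have := ler_wpM2l x0 t_half; lra.
Qed.

Lemma tilt_excess_le r q x : 0 < r <= 1 -> 0 < q < 1 -> 0 <= x ->
  tilt r q - q + x * tilt r q <= x - (1 - r) * (q * (1 - q)).
Proof.
move=> /andP[r0 r1] q01 x0; have /andP[q0 q1] := q01.
have t1 := ler_wpM2l x0 (tilt_le1 r0 q01).
suff : (1 - r) * (q * (1 - q)) <= q - tilt r q by lra.
have -> : q - tilt r q = (1 - r) * (q * (1 - q)) / (r * q + (1 - q)).
  by rewrite /tilt; field; rewrite gt_eqF //; nra.
rewrite ler_pdivlMr; last by nra.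
have : 0 <= (1 - r) * (q * (1 - q)) by apply: mulr_ge0; nra.
nra.
Qed.

Lemma excess_ratio_ge1 r d p : 1 <= d -> 1 <= r -> 0 < p < 1 ->
  (r - 1) ^+ 2 / (2 * (r + 1) ^+ 2) + (r - 1) / r * (d - p * (1 - p)) <= p ->
  r - 1 <= 6 / d.
Proof.
move=> d1 r1 /andP[p0 p1] H.
set c := _ / (2 * _) in H.
have c_eq : c * (2 * (r + 1) ^+ 2) = (r - 1) ^+ 2 by rewrite /c divfK // gt_eqF //; nra.
have key : (r - 1) * d + r * c <= r.
  have : r * (c + (r - 1) / r * (d - p * (1 - p))) <= r * p by rewrite ler_pM2l //; lra.
  have -> : r * (c + (r - 1) / r * (d - p * (1 - p))) = r * c + (r - 1) * (d - p * (1 - p)).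
    by field; rewrite gt_eqF //; lra.
  have : 0 <= (1 - p) * (r - (r - 1) * p) by apply: mulr_ge0; nra.
  nra.
have r5 : r <= 5.
  have rc1 : r * c <= 1 by nra.
  have : r * (r - 1) ^+ 2 <= 2 * (r + 1) ^+ 2.
    by rewrite -c_eq mulrA -[X in _ <= X]mul1r ler_wpM2r // mulr_ge0 ?sqr_ge0.
  nra.
rewrite ler_pdivlMr; last lra.
have : 0 <= r * c by apply: mulr_ge0; [lra | rewrite /c divr_ge0 // ?sqr_ge0 //; nra].
lra.
Qed.

Lemma excess_ratio_le1 r d p : 1 <= d -> r <= 1 -> 0 < p < 1 ->
  p <= 1 - (1 - r) * (d - p * (1 - p)) -> 1 - r <= 6 / d.
Proof.
move=> d1 r1 /andP[p0 p1] H.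
have r0 : 1 - r <= 1 by nra.
rewrite ler_pdivlMr; last lra.
nra.
Qed.

Lemma removal_excess a b q A B C psi : 0 < a -> 0 < b -> 0 < q < 1 -> 0 <= B ->
  a = q * B + (1 - q) * A -> b = q * A + (1 - q) * C -> B * C <= A * A ->
  psi = q * A / b + (1 - q) * A / a - 1 ->
  [/\ 0 <= psi, psi * (1 - q) <= a / b * q &
      q * A / b - q = tilt (a / b) q - q + psi * tilt (a / b) q].
Proof.
move=> a0 b0 q01 B0 ea eb BC ->; have /andP[q0 q1] := q01.
have tE : tilt (a / b) q = q * a / (q * a + (1 - q) * b) by apply: tilt_ratio; lra.
have D0 : 0 < q * a + (1 - q) * b by nra.
split.
- have -> : q * A / b + (1 - q) * A / a - 1 = (A * (q * a + (1 - q) * b) - a * b) / (a * b).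
    by field; rewrite !gt_eqF.
  (* A (q a + (1 - q) b) - a b = q (1 - q) (A^2 - B C) *)
  apply: divr_ge0; last by nra.
  have : 0 <= q * (1 - q) * (A * A - B * C) by apply: mulr_ge0; nra.
  rewrite ea eb; nra.
- have hA : (1 - q) * A <= a by nra.
  have -> : (q * A / b + (1 - q) * A / a - 1) * (1 - q)
          = q / b * ((1 - q) * A) + (1 - q) / a * ((1 - q) * A) - (1 - q).
    by field; rewrite !gt_eqF.
  have h1 : q / b * ((1 - q) * A) <= q / b * a by rewrite ler_wpM2l // divr_ge0 //; lra.
  have h2 : (1 - q) / a * ((1 - q) * A) <= 1 - q.
    by rewrite mulrAC ler_pdivrMr // ler_wpM2l //; lra.
  rewrite mulrC mulrA; lra.
- by rewrite tE; field; rewrite !gt_eqF.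
Qed.

Lemma ratio_bound (I : finType) (J : {pred I}) (q psi : I -> R) r p :
  0 < r -> 0 < p < 1 -> (forall j, 0 < q j < 1) ->
  (forall j, j \in J -> 0 <= psi j /\ psi j * (1 - q j) <= r * q j) ->
  \sum_(j in J) psi j = 1 ->
  \sum_(j in J) (tilt r (q j) - q j + psi j * tilt r (q j)) = p ->
  1 <= p * (1 - p) + \sum_(j in J) q j * (1 - q j) ->
  `|1 - r| <= 6 / (p * (1 - p) + \sum_(j in J) q j * (1 - q j)).
Proof.
move=> r0 p01 q01 psiP psi1 sum_p; set d := p * (1 - p) + _ => d1.
have sum_var : \sum_(j in J) q j * (1 - q j) = d - p * (1 - p) by rewrite /d; ring.
case: (lerP 1 r) => r1.
  apply: (excess_ratio_ge1 (p := p)) => //.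
  rewrite -sum_var -sum_p; set c := _ / (2 * _).
  have -> : c + (r - 1) / r * \sum_(j in J) q j * (1 - q j)
          = \sum_(j in J) (c * psi j + (r - 1) / r * (q j * (1 - q j))).
    by rewrite big_split /= -!mulr_sumr psi1 mulr1.
  by apply: ler_sum => j /psiP[psi0 psi_le]; exact: tilt_excess_ge.
apply: (excess_ratio_le1 (p := p)) => //; first exact: ltW.
rewrite -sum_var -sum_p.
have -> : 1 - (1 - r) * \sum_(j in J) q j * (1 - q j)
        = \sum_(j in J) (psi j - (1 - r) * (q j * (1 - q j))).
  by rewrite sumrB -mulr_sumr psi1.
by apply: ler_sum => j /psiP[psi0 _]; apply: tilt_excess_le => //; rewrite r0 ltW.
Qed.

End Tilt.

Section PoissonBinomial.
Variables (R : realFieldType) (N : nat) (q : 'I_N -> R).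

Definition poibin_weight (J T : {set 'I_N}) : R :=
  (\prod_(x in T) q x) * (\prod_(x in J :\: T) (1 - q x)).

Definition poibin (J : {set 'I_N}) (k : nat) : R :=
  \sum_(T : {set 'I_N} | (T \subset J) && (#|T| == k)) poibin_weight J T.

Lemma poibin_split (J : {set 'I_N}) j k :
  poibin J k =
    \sum_(T : {set 'I_N} | [&& T \subset J, #|T| == k & j \in T]) poibin_weight J T
  + \sum_(T : {set 'I_N} | [&& T \subset J, #|T| == k & j \notin T]) poibin_weight J T.
Proof.
rewrite /poibin (bigID (fun T : {set 'I_N} => j \in T)) /=.
by congr (_ + _); apply: eq_bigl => T; rewrite andbA.
Qed.

Lemma poibinD1_in (J : {set 'I_N}) j k : j \in J ->
  q j * poibin (J :\ j) k =
  \sum_(T : {set 'I_N} | [&& T \subset J, #|T| == k.+1 & j \in T]) poibin_weight J T.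
Proof.
move=> jJ; rewrite /poibin big_distrr /=; symmetry.
rewrite (reindex_onto (fun T => j |: T) (fun T => T :\ j)); last first.
  by move=> T /and3P[_ _ jT]; rewrite setD1K.
symmetry; apply: eq_big => T.
  rewrite subsetD1 setU11 andbT.
  case jT: (j \in T) => /=.
    rewrite andbF /=; symmetry; apply/negbTE/negP => /andP[_ /eqP e].
    by move: jT; rewrite -{1}e !inE eqxx.
  rewrite setU1K ?(negbT jT) // eqxx andbT cardsU1 jT add1n eqSS.
  by rewrite subUset sub1set jJ andbT.
rewrite subsetD1 => /andP[/andP[_ jT] _].
rewrite /poibin_weight big_setU1 //= mulrA.
congr (_ * _); apply: eq_bigl => x; rewrite !inE.
by case: (x == j); case: (x \in T).
Qed.

Lemma poibinD1_notin (J : {set 'I_N}) j k : j \in J ->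
  (1 - q j) * poibin (J :\ j) k =
  \sum_(T : {set 'I_N} | [&& T \subset J, #|T| == k & j \notin T]) poibin_weight J T.
Proof.
move=> jJ; rewrite /poibin big_distrr /=.
apply: eq_big => T.
  by rewrite subsetD1; case: (T \subset J); case: (j \in T); case: (#|T| == k).
rewrite subsetD1 => /andP[/andP[TJ jT] _]; rewrite /poibin_weight.
have -> : J :\: T = j |: ((J :\ j) :\: T).
  apply/setP => x; rewrite !inE; case: eqP => [->|] //=.
  by rewrite jJ andbT.
rewrite [X in _ = _ * X]big_setU1 /=; last by rewrite !inE eqxx /= ?andbF.
by rewrite mulrCA.
Qed.

Lemma poibinS_rec (J : {set 'I_N}) j k : j \in J ->
  poibin J k.+1 = q j * poibin (J :\ j) k + (1 - q j) * poibin (J :\ j) k.+1.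
Proof. by move=> jJ; rewrite (poibin_split J j) poibinD1_in // poibinD1_notin. Qed.

Lemma poibin0_rec (J : {set 'I_N}) j : j \in J ->
  poibin J 0 = (1 - q j) * poibin (J :\ j) 0.
Proof.
move=> jJ; rewrite (poibin_split J j) poibinD1_notin // big_pred0 ?add0r // => T.
apply/negbTE/negP => /and3P[_ /eqP/cards0_eq -> ]; by rewrite inE.
Qed.

Lemma poibin_set0S k : poibin set0 k.+1 = 0.
Proof.
rewrite /poibin big_pred0 // => T; apply/negbTE/negP => /andP[].
by rewrite subset0 => /eqP ->; rewrite cards0.
Qed.

Lemma poibin_set00 : poibin set0 0 = 1.
Proof.
rewrite /poibin (big_pred1 set0) => [|T]; last first.
  by rewrite subset0 /=; case: eqP => [->|]; rewrite ?cards0 ?andbF.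
by rewrite /poibin_weight setD0 !big_set0 mulr1.
Qed.

Lemma poibin_sum_in (J : {set 'I_N}) k :
  k.+1%:R * poibin J k.+1 = \sum_(j in J) q j * poibin (J :\ j) k.
Proof.
symmetry.
transitivity (\sum_(j in J) \sum_(T : {set 'I_N} | (T \subset J) && (#|T| == k.+1))
                 (if j \in T then poibin_weight J T else 0)).
  apply: eq_bigr => j jJ; rewrite (poibinD1_in _ jJ) -big_mkcondr.
  by apply: eq_bigl => T; rewrite andbA.
rewrite exchange_big /poibin big_distrr /=; apply: eq_bigr => T /andP[TJ /eqP cT].
rewrite -big_mkcondr /= (eq_bigl (fun j => j \in J :&: T)) => [|j]; last by rewrite inE.
by rewrite sumr_const (setIidPr TJ) cT mulr_natl.
Qed.

Lemma poibin_sum_notin (J : {set 'I_N}) k :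
  (#|J| - k)%:R * poibin J k = \sum_(j in J) (1 - q j) * poibin (J :\ j) k.
Proof.
symmetry.
transitivity (\sum_(j in J) \sum_(T : {set 'I_N} | (T \subset J) && (#|T| == k))
                 (if j \notin T then poibin_weight J T else 0)).
  apply: eq_bigr => j jJ; rewrite (poibinD1_notin _ jJ) -big_mkcondr.
  by apply: eq_bigl => T; rewrite andbA.
rewrite exchange_big /poibin big_distrr /=; apply: eq_bigr => T /andP[TJ /eqP cT].
rewrite -big_mkcondr /= (eq_bigl (fun j => j \in J :\: T)) => [|j]; last by rewrite !inE andbC.
by rewrite sumr_const cardsD (setIidPr TJ) cT mulr_natl.
Qed.

Hypothesis q_prob : forall x, 0 < q x < 1.

Lemma poibin_ge0 J k : 0 <= poibin J k.
Proof.
apply: sumr_ge0 => T _; apply: mulr_ge0; apply: prodr_ge0 => x _;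
  have /andP[q0 q1] := q_prob x; lra.
Qed.

Lemma card_setD1_pick m (J : {set 'I_N}) : #|J| = m.+1 ->
  exists2 j, j \in J & #|J :\ j| = m.
Proof.
move=> cJ; have /set0Pn[j jJ] : J != set0 by rewrite -card_gt0 cJ.
by exists j => //; apply/eqP; rewrite -eqSS -cJ (cardsD1 j J) jJ.
Qed.

Lemma poibin_gt0 (J : {set 'I_N}) k : (k <= #|J|)%N -> 0 < poibin J k.
Proof.
move=> km; move cJ : #|J| km => m; elim: m J k cJ => [|m IH] J k cJ km.
  move: km; rewrite leqn0 => /eqP ->.
  by move/cards0_eq: cJ => ->; rewrite poibin_set00 ltr01.
have [j jJ cJ'] := card_setD1_pick cJ.
have /andP[q0 q1] := q_prob j.
case: k km => [|k] km.
  rewrite (poibin0_rec jJ); have := IH _ 0%N cJ' (leq0n _); nra.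
rewrite (poibinS_rec _ jJ); have := IH _ k cJ' km.
have := poibin_ge0 (J :\ j) k.+1; nra.
Qed.

Lemma poibin_log_concave (J : {set 'I_N}) i j : (i <= j)%N ->
  poibin J i * poibin J j.+2 <= poibin J i.+1 * poibin J j.+1.
Proof.
move cJ : #|J| => m; elim: m J cJ i j => [|m IH] J cJ i j ij.
  by move/cards0_eq: cJ => ->; rewrite !poibin_set0S mulr0 mul0r.
have [l lJ /IH {}IH] := card_setD1_pick cJ.
set F := poibin (J :\ l) in IH *.
have /andP[q0 q1] := q_prob l.
have F0 k : 0 <= F k by apply: poibin_ge0.
have qq0 : 0 <= q l * q l by nra.
have rr0 : 0 <= (1 - q l) * (1 - q l) by nra.
have qr0 : 0 <= q l * (1 - q l) by nra.
case: i ij => [|i] ij.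
  rewrite (poibin0_rec lJ) !(poibinS_rec _ lJ) -/F.
  have := ler_wpM2l rr0 (IH 0%N j ij).
  have : 0 <= q l * q l * (F 0%N * F j) by apply: mulr_ge0 => //; apply: mulr_ge0.
  have : 0 <= q l * (1 - q l) * (F 1%N * F j) by apply: mulr_ge0 => //; apply: mulr_ge0.
  lra.
case: j ij => [|j] // ij.
rewrite !(poibinS_rec _ lJ) -/F.
have cross : F i * F j.+3 <= F i.+2 * F j.+1.
  case: (ltnP i j) => ij'.
    by have := IH i.+1 j ij'; have := IH i j.+1 (leqW ij); lra.
  have -> : i = j by apply/eqP; rewrite eqn_leq ij' andbT.
  by have := IH j j.+1 (leqnSn j); lra.
have := ler_wpM2l qq0 (IH i j ij).
have := ler_wpM2l rr0 (IH i.+1 j.+1 ij).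
have := ler_wpM2l qr0 cross.
lra.
Qed.

Lemma poibin_removal (J : {set 'I_N}) j k : j \in J ->
  exists2 B, 0 <= B &
    poibin J k = q j * B + (1 - q j) * poibin (J :\ j) k
    /\ B * poibin (J :\ j) k.+1 <= poibin (J :\ j) k * poibin (J :\ j) k.
Proof.
move=> jJ; case: k => [|k].
  exists 0 => //; rewrite mulr0 add0r mul0r (poibin0_rec jJ); split => //.
  by rewrite mulr_ge0 ?poibin_ge0.
exists (poibin (J :\ j) k); first exact: poibin_ge0.
by rewrite (poibinS_rec _ jJ) poibin_log_concave.
Qed.

Lemma poibin_ratio_bound (J : {set 'I_N}) k p : (k < #|J|)%N -> 0 < p < 1 ->
  \sum_(j in J) q j = k.+1%:R - p ->
  1 <= p * (1 - p) + \sum_(j in J) q j * (1 - q j) ->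
  `|1 - poibin J k / poibin J k.+1|
    <= 6 / (p * (1 - p) + \sum_(j in J) q j * (1 - q j)).
Proof.
move=> kJ p01 sum_q d1.
set a := poibin J k; set b := poibin J k.+1.
have a0 : 0 < a by apply: poibin_gt0; apply: ltnW.
have b0 : 0 < b by apply: poibin_gt0.
pose A j := poibin (J :\ j) k.
pose psi j := q j * A j / b + (1 - q j) * A j / a - 1.
have psiP j : j \in J -> [/\ 0 <= psi j, psi j * (1 - q j) <= a / b * q j &
    q j * A j / b - q j = tilt (a / b) (q j) - q j + psi j * tilt (a / b) (q j)].
  move=> jJ; have [B B0 [aE BC]] := poibin_removal k jJ.
  exact: removal_excess a0 b0 (q_prob j) B0 aE (poibinS_rec _ jJ) BC _.
apply: (ratio_bound (psi := psi)) => //.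
- by apply: divr_gt0.
- by move=> j /psiP[].
- rewrite /psi !big_split /= -!mulr_suml -poibin_sum_in -poibin_sum_notin.
  rewrite sumr_const mulfK ?mulfK ?gt_eqF // natrB 1?ltnW //.
  by rewrite -mulr_natr; ring.
- transitivity (\sum_(j in J) (q j * A j / b - q j)).
    by apply: eq_bigr => j /psiP[_ _ ->].
  by rewrite sumrB -mulr_suml -poibin_sum_in mulfK ?gt_eqF // sum_q; ring.
Qed.

End PoissonBinomial.

Lemma sum_lt_card (R : numDomainType) (I : finType) (f : I -> R) (i0 : I) :
  (forall i, f i < 1) -> \sum_i f i < #|I|%:R.
Proof.
move=> f_lt1; rewrite -sum1_card natr_sum.
by apply: ltr_sum => [|i _]; [apply/hasP; exists i0; rewrite ?mem_index_enum | exact: f_lt1].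
Qed.

Lemma sum_setC1 (R : nmodType) (I : finType) (f : I -> R) (i : I) :
  \sum_j f j = f i + \sum_(j in [set~ i]) f j.
Proof. by rewrite (bigD1 i) //=; congr (_ + _); apply: eq_bigl => j; rewrite in_setC1. Qed.

Section Rejective.
Variables (R : realFieldType) (N : nat) (p : 'I_N -> R).

Lemma rej_weight_poibin s : rej_weight p s = poibin_weight p [set: 'I_N] s.
Proof. by rewrite /poibin_weight setTD. Qed.

Lemma rej_incl_poibin n i :
  rej_incl n.+1 p i = p i * poibin p [set~ i] n
    / (p i * poibin p [set~ i] n + (1 - p i) * poibin p [set~ i] n.+1).
Proof.
have iT : i \in [set: 'I_N] by rewrite inE.
have norm_eq : \sum_(t : {set 'I_N} | #|t| == n.+1) rej_weight p t = poibin p [set: 'I_N] n.+1.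
  by apply: eq_big => [t | t _]; rewrite ?subsetT ?rej_weight_poibin.
rewrite /rej_incl /rej_prob norm_eq (poibinS_rec _ n iT) -big_mkcondr -mulr_suml.
rewrite -setTD -/([set: 'I_N] :\ i) (poibinD1_in _ n iT); congr (_ / _).
by apply: eq_big => [t | t _]; rewrite ?subsetT ?rej_weight_poibin // andbC.
Qed.

End Rejective.

Theorem mainTheorem6 (R : realFieldType) (N n : nat) (p : 'I_N -> R)
  (hn1 : (1 <= n)%N) (hnN : (n <= N)%N)
  (hp : forall i, 0 < p i < 1)
  (hsum : \sum_(i < N) p i = n%:R)
  (hd : 1 <= rej_dN p) :
  forall i : 'I_N,
    `| (rej_incl n p i)^-1 - (p i)^-1 |
      <= 6 / rej_dN p * ((1 - rej_incl n p i) / rej_incl n p i).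
Proof.
move=> i; case: n hn1 hnN hsum => // k _ _ hsum.
have kN : (k.+1 < N)%N.
  have := sum_lt_card i (fun j => proj2 (andP (hp j))).
  by rewrite card_ord hsum ltr_nat.
have kJ : (k < #|[set~ i]|)%N by rewrite cardsC1 card_ord -ltnS prednK // (ltn_trans _ kN).
have dE : rej_dN p = p i * (1 - p i) + \sum_(j in [set~ i]) p j * (1 - p j).
  exact: sum_setC1.
have sum_J : \sum_(j in [set~ i]) p j = k.+1%:R - p i.
  by rewrite -hsum (sum_setC1 _ i) addrAC subrr add0r.
rewrite rej_incl_poibin -tilt_ratio ?poibin_ge0 ?poibin_gt0 //.
set r := poibin p [set~ i] k / _.
have r0 : 0 < r by rewrite divr_gt0 // poibin_gt0 // ltnW.
rewrite invr_tilt_sub //.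
have w0 : 0 <= (1 - tilt r (p i)) / tilt r (p i).
  by rewrite divr_ge0 ?subr_ge0 ?tilt_le1 // ltW // tilt_gt0.
rewrite normrM (ger0_norm w0) ler_wpM2r // dE.
by apply: poibin_ratio_bound; rewrite // -dE.
Qed.
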